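(* Let $IS\in\{\Box,\blacksquare\}^2$ and let $\tau$ be a compositional translation from $\mathrm{SYNCSIMPLE}$ into $\mathrm{LOCKSIMPLE}_{2,IS}$ of blocking type $(P_1,P_2)$. Suppose $\tau(!)$ is a concatenation of blocks, each in $\{T_1,T_2\}^*P_1$ or $\{T_1,T_2\}^*P_2$, followed by a suffix in $\{T_1,T_2\}^*$, and $\tau(?)$ is a concatenation of blocks, each in $\{T_1,T_2\}^*P_1$ or $\{T_1,T_2\}^*P_2$. Then $\tau$ is not correct.
   Context: $\mathrm{SYNCSIMPLE}$: subprocesses $\mathcal{U} ::= \checkmark \mid 0 \mid\, !\mathcal{U} \mid\, ?\mathcal{U}$; processes are finite parallel compositions ($\mid$ associative, commutative, $0$ a unit). Reduction: $!\mathcal{U}_1\mid ?\mathcal{U}_2\mid \mathcal{P}\to \mathcal{U}_1\mid\mathcal{U}_2\mid\mathcal{P}$. Successful: of form $\checkmark\mid\mathcal{P}$; may-convergent: reduces to a successful process; must-convergent: every reachable process is may-convergent. $\mathrm{LOCKSIMPLE}_{k,IS}$ ($IS\in\{\Box,\blacksquare\}^k$, $\Box$ empty, $\blacksquare$ full): subprocesses are words over $\{P_1,T_1,\dots,P_k,T_k\}$ followed by $0$ or $\checkmark$; states $(\mathcal{P},C)$ reduce by $(P_i\mathcal{U}\mid\mathcal{P},C)\to(\mathcal{U}\mid\mathcal{P},C[C_i:=\blacksquare])$ only if $C_i=\Box$, and $(T_i\mathcal{U}\mid\mathcal{P},C)\to(\mathcal{U}\mid\mathcal{P},C[C_i:=\Box])$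 always. Success = process contains $\checkmark$; a process $\mathcal{P}$ is may/must-convergent iff the state $(\mathcal{P},IS)$ is. A compositional translation $\tau$ is given by words $\tau(!),\tau(?)$ with $\tau(0)=0$, $\tau(\checkmark)=\checkmark$, $\tau(!\mathcal{U})=\tau(!)\tau(\mathcal{U})$, $\tau(?\mathcal{U})=\tau(?)\tau(\mathcal{U})$, $\tau$ commuting with $\mid$; correct = preserves and reflects may- and must-convergence. Blocking type: for a word $S$, run $S$ as a single subprocess from $IS$; if it gets stuck at an occurrence of $P_i$ which is the first symbol from $\{P_i,T_i\}$ in $S$, the blocking type of $S$ is $P_i$ (if the stuck occurrence is not the first such symbol, the type is $P_iP_i$). $\tau$ has blocking type $(W_1,W_2)$ if $\tau(!)$ has type $W_1$ and $\tau(?)$ type $W_2$. For sets of symbols, $X^*$ denotes finite words over $X$ and juxtaposition denotes concatenation. *)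

From Stdlib Require Import List Permutation.
From mathcomp Require Import all_boot.

Set Implicit Arguments.
Unset Strict Implicit.
Unset Printing Implicit Defensive.

Inductive star (A : Type) (R : A -> A -> Prop) : A -> A -> Prop :=
| star_refl x : star R x x
| star_step x y z : R x y -> star R y z -> star R x z.

Inductive sproc : Type :=
| SCheck : sproc
| SZero : sproc
| SSend : sproc -> sproc
| SRecv : sproc -> sproc.

(* a process is a finite parallel composition, i.e. a list of subprocesses
   taken modulo permutation (| is associative and commutative). *)
Definition sprocess := seq sproc.

Inductive sstep : sprocess -> sprocess -> Prop :=
| sstep_intro (U1 U2 : sproc) (R P Q : sprocess) :
    Permutation P (SSend U1 :: SRecv U2 :: R) ->
    Permutation Q (U1 :: U2 :: R) ->
    sstep P Q.

Definition ssuccessful (P : sprocess) : Prop := List.In SCheck P.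

Definition smay (P : sprocess) : Prop :=
  exists Q, star sstep P Q /\ ssuccessful Q.

Definition smust (P : sprocess) : Prop :=
  forall Q, star sstep P Q -> smay Q.

(* lock symbols P_i, T_i for i : 'I_k (index i corresponds to P_{i+1}) *)
Inductive lsym (k : nat) : Type :=
| LP : 'I_k -> lsym k
| LT : 'I_k -> lsym k.

Definition lsym_idx k (s : lsym k) : 'I_k :=
  match s with LP i => i | LT i => i end.

Definition is_T k (s : lsym k) : bool :=
  match s with LT _ => true | LP _ => false end.

(* lock cells: Empty = box, Full = filled box *)
Inductive lock : Type := Empty | Full.

Definition lconf (k : nat) := 'I_k -> lock.

Definition upd (A : Type) k (C : 'I_k -> A) (i : 'I_k) (v : A) : 'I_k -> A :=
  fun j => if j == i then v else C j.

(* a subprocess: a word over {P_i,T_i} followed by 0 (false) or check (true) *)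
Definition lsub (k : nat) := (seq (lsym k) * bool)%type.
Definition lprocess (k : nat) := seq (lsub k).
Definition lstate (k : nat) := (lprocess k * lconf k)%type.

Inductive lstep (k : nat) : lstate k -> lstate k -> Prop :=
| lstep_P (i : 'I_k) (U : seq (lsym k)) (c : bool) (R P Q : lprocess k) (C : lconf k) :
    Permutation P ((LP i :: U, c) :: R) ->
    C i = Empty ->
    Permutation Q ((U, c) :: R) ->
    lstep (P, C) (Q, upd C i Full)
| lstep_T (i : 'I_k) (U : seq (lsym k)) (c : bool) (R P Q : lprocess k) (C : lconf k) :
    Permutation P ((LT i :: U, c) :: R) ->
    Permutation Q ((U, c) :: R) ->
    lstep (P, C) (Q, upd C i Empty).

Definition lsuccessful k (S : lstate k) : Prop := List.In ([::], true) S.1.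

Definition lmay k (S : lstate k) : Prop :=
  exists S', star (@lstep k) S S' /\ lsuccessful S'.

Definition lmust k (S : lstate k) : Prop :=
  forall S', star (@lstep k) S S' -> lmay S'.

(* tau given by the words w1 = tau(!) and w2 = tau(?) *)
Fixpoint tr k (w1 w2 : seq (lsym k)) (U : sproc) : lsub k :=
  match U with
  | SCheck => ([::], true)
  | SZero => ([::], false)
  | SSend U' => let r := tr w1 w2 U' in (w1 ++ r.1, r.2)
  | SRecv U' => let r := tr w1 w2 U' in (w2 ++ r.1, r.2)
  end.

Definition trP k (w1 w2 : seq (lsym k)) (P : sprocess) : lprocess k :=
  map (tr w1 w2) P.

Definition correct k (w1 w2 : seq (lsym k)) (IS : lconf k) : Prop :=
  forall P : sprocess,
    (smay P <-> lmay (trP w1 w2 P, IS)) /\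
    (smust P <-> lmust (trP w1 w2 P, IS)).

Inductive btype (k : nat) : Type :=
| BNone : btype k
| BP : 'I_k -> btype k         (* stuck at the first symbol of {P_i,T_i} *)
| BPP : 'I_k -> btype k.       (* stuck at a later P_i *)

(* run a word as a single subprocess; [seen i] records whether a symbol
   from {P_i,T_i} has already occurred *)
Fixpoint btype_run k (w : seq (lsym k)) (C : lconf k) (seen : 'I_k -> bool)
  : btype k :=
  match w with
  | [::] => BNone k
  | LP i :: w' =>
      match C i with
      | Full => if seen i then BPP i else BP i
      | Empty => btype_run w' (upd C i Full) (upd seen i true)
      end
  | LT i :: w' => btype_run w' (upd C i Empty) (upd seen i true)
  end.

Definition btype_of k (w : seq (lsym k)) (IS : lconf k) : btype k :=
  btype_run w IS (fun _ => false).

Definition is_block k (b : seq (lsym k)) : Prop :=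
  exists (ts : seq (lsym k)) (i : 'I_k), all (@is_T k) ts /\ b = rcons ts (LP i).

Definition blocks k (w : seq (lsym k)) : Prop :=
  exists bs : seq (seq (lsym k)), List.Forall (@is_block k) bs /\ w = flatten bs.

Definition blocks_then_Ts k (w : seq (lsym k)) : Prop :=
  exists (bs : seq (seq (lsym k))) (suf : seq (lsym k)),
    List.Forall (@is_block k) bs /\ all (@is_T k) suf /\ w = flatten bs ++ suf.

Definition idx1 : 'I_2 := @ord0 1.
Definition idx2 : 'I_2 := @ord_max 1.

(* With blocking types P_1 and P_2 both locks of IS are full, and freeing locks can only
   enable steps, so an interleaving of the translated words that runs from IS runs from
   every configuration.  Since !0 | ?✓ may converge, some interleaving of τ(!) and τ(?)
   consumes all of τ(?), which ends with some P_j; that P_j fires with lock j free.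
   Since !✓ | ?0 must converge, τ(!) can still be completed right after that P_j, hence
   also right before it.  So τ(!) | τ(?) reaches 0 | P_j from any configuration.  In the
   must-convergent process !0 | ?✓ | !0 | ?0 we do this for both pairs and then fire at
   most one remaining P_j: lock j is full and P_j✓ is blocked forever. *)

From Stdlib Require Import List Permutation.
From mathcomp Require Import all_boot.

Set Implicit Arguments.
Unset Strict Implicit.
Unset Printing Implicit Defensive.

Section Star.
Variables (A B : Type) (R : A -> A -> Prop) (R' : B -> B -> Prop).

Lemma star_one x y : R x y -> star R x y.
Proof. by move=> Rxy; apply: star_step Rxy (star_refl _ _). Qed.

Lemma star_trans x y z : star R x y -> star R y z -> star R x z.
Proof. by elim=> // x0 y0 z0 R0 _ IH /IH; apply: star_step. Qed.

Lemma star_stuck x y : (forall z, ~ R x z) -> star R x y -> y = x.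
Proof. by move=> stuck H; case: H stuck => // ? z ? Rxz _ /(_ z Rxz). Qed.

Lemma star_simulation (sim : A -> B -> Prop) :
  (forall x y x', R x y -> sim x x' -> exists2 y', R' x' y' & sim y y') ->
  forall x y x', star R x y -> sim x x' -> exists2 y', star R' x' y' & sim y y'.
Proof.
move=> step x y x' H; elim: H x' => [z|x0 y0 z0 R0 _ IH] x' sim0.
  by exists x'; first exact: star_refl.
have [y1 R'y1 sim1] := step _ _ _ R0 sim0.
have [z1 Hz1 simz] := IH _ sim1.
by exists z1; first exact: star_step R'y1 Hz1.
Qed.

End Star.

Section ListPermutation.
Variable T : Type.

Lemma count_Permutation (p : pred T) (l l' : seq T) :
  Permutation l l' -> count p l = count p l'.
Proof.
elim=> //= [x l0 l1 _ -> | x y l0 | l0 l1 l2 _ -> _ ->] //.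
by rewrite addnCA.
Qed.

Lemma hasP_In (p : pred T) (l : seq T) :
  reflect (exists2 x, In x l & p x) (has p l).
Proof.
elim: l => [|y l IH] /=; first by right; case.
case py: (p y); first by left; exists y; [left|].
apply: (iffP IH) => [[x lx px]|[x [<-|lx] px]].
- by exists x; first right.
- by rewrite py in px.
- by exists x.
Qed.

Lemma In2_Permutation (x y : T) (l : seq T) :
  In x l -> In y l -> x <> y -> exists R, Permutation l (x :: y :: R).
Proof.
move=> /(in_split _ _) [l1 [l2 ->]] ly xy.
have /(in_split _ _) [m1 [m2 E]] : In y (l1 ++ l2)%list.
  by case: (in_app_or _ _ _ ly) => [|[//|]] ly'; apply: in_or_app; auto.
exists (m1 ++ m2); apply: Permutation_trans (Permutation_sym (Permutation_middle _ _ _)) _.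
by apply: perm_skip; rewrite E; apply/Permutation_sym/Permutation_middle.
Qed.

End ListPermutation.

Section Locks.
Variable k : nat.
Implicit Types (s : lsym k) (C D : lconf k) (a b u v w : seq (lsym k)).

Definition fire s C D : Prop :=
  match s with
  | LP i => C i = Empty /\ D = upd C i Full
  | LT i => D = upd C i Empty
  end.

Lemma lstepP P C Q D :
  lstep (P, C) (Q, D) <->
  exists s U c R,
    [/\ Permutation P ((s :: U, c) :: R), fire s C D & Permutation Q ((U, c) :: R)].
Proof.
split.
  move=> H; inversion H; subst.
    by exists (LP i), U, c, R.
  by exists (LT i), U, c, R.
case=> [[i|i]] [U [c [R [HP HC HQ]]]]; last by rewrite HC; apply: lstep_T HP HQ.
by case: HC => HCi ->; apply: lstep_P HP HCi HQ.
Qed.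

Lemma lstep_frame L1 L2 s U c C D :
  fire s C D -> lstep (L1 ++ (s :: U, c) :: L2, C) (L1 ++ (U, c) :: L2, D).
Proof.
move=> HC; apply/lstepP; exists s, U, c, (L1 ++ L2).
by split=> //; apply/Permutation_sym/Permutation_middle.
Qed.

Lemma lstep_stuck P C j :
  C j = Full -> (forall x, In x P -> x.1 = [::] \/ x.1 = [:: LP j]) ->
  forall S, ~ lstep (P, C) S.
Proof.
move=> Cj words [Q D] /lstepP [s [U [c [R [HP HC _]]]]].
have /words[//|[Es _]] : In (s :: U, c) P.
  by apply: Permutation_in (Permutation_sym HP) _; left.
by move: HC; rewrite Es /= Cj => -[].
Qed.

Lemma not_lmust_stuck S P C j :
  star (@lstep k) S (P, C) -> C j = Full ->
  (forall x, In x P -> x.1 = [::] \/ x.1 = [:: LP j]) -> ~ In ([::], true) P -> ~ lmust S.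
Proof.
move=> run Cj words fail /(_ _ run) [S' [run' succ]].
by move: succ; rewrite (star_stuck (lstep_stuck Cj words) run').
Qed.

Definition istate := (seq (lsym k) * seq (lsym k) * lconf k)%type.

Inductive istep : istate -> istate -> Prop :=
| istep_l s a b C D : fire s C D -> istep (s :: a, b, C) (a, b, D)
| istep_r s a b C D : fire s C D -> istep (a, s :: b, C) (a, b, D).

Lemma istar_lstar L1 L2 fa fb a b C a' b' D :
  star istep (a, b, C) (a', b', D) ->
  star (@lstep k) (L1 ++ (a, fa) :: (b, fb) :: L2, C)
                  (L1 ++ (a', fa) :: (b', fb) :: L2, D).
Proof.
pose embed (X : istate) := (L1 ++ (X.1.1, fa) :: (X.1.2, fb) :: L2, X.2).
have step X Y S : istep X Y -> S = embed X -> exists2 S', lstep S S' & S' = embed Y.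
  move=> H ->; exists (embed Y) => //; case: X Y / H => s0 a0 b0 C0 D0 H.
    exact: lstep_frame.
  by have := lstep_frame (L1 ++ [:: (a0, fa)]) L2 b0 fb H; rewrite -!catA.
move=> run; have [S lrun ES] := star_simulation step run (erefl (embed (a, b, C))).
by rewrite ES in lrun.
Qed.

Lemma lmay_pair fa fb a b C :
  lmay ([:: (a, fa); (b, fb)], C) ->
  exists a' b' D, star istep (a, b, C) (a', b', D) /\ (a' = [::] /\ fa \/ b' = [::] /\ fb).
Proof.
pose sim S (X : istate) := S.2 = X.2 /\ Permutation S.1 [:: (X.1.1, fa); (X.1.2, fb)].
have step S S' X : lstep S S' -> sim S X -> exists2 X', istep X X' & sim S' X'.
  case: S S' X => P C0 [Q D] [[a0 b0] C1] /lstepP [s [U [c [R [HP HC HQ]]]]].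
  rewrite /sim /= => -[<- HX].
  case: (Permutation_length_2_inv (Permutation_trans (Permutation_sym HX) HP)) HQ
    => -[<- <- ->] HQ.
  - by exists (U, b0, D); first exact: istep_l.
  - exists (a0, U, D); first exact: istep_r.
    by split=> //; rewrite HQ; exact: perm_swap.
case=> S [run success].
have [[[a' b'] D] irun [_ /= HS]] :=
  star_simulation step run (conj erefl (Permutation_refl _) : sim (_, C) (a, b, C)).
exists a', b', D; split=> //.
by case: (Permutation_in _ HS success) => [[-> ->]|[[-> ->]|[]]]; [left|right].
Qed.

Lemma istar_right_idle a C a' b' D b :
  star istep (a, [::], C) (a', b', D) -> star istep (a, b, C) (a', b, D).
Proof.
pose sim (X Y : istate) := X.1.2 = [::] /\ Y = (X.1.1, b, X.2).
have step X X' Y : istep X X' -> sim X Y -> exists2 Y', istep Y Y' & sim X' Y'.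
  by case: X X' / => s0 a0 b0 C0 D0 H [//= -> ->]; exists (a0, b, D0); first exact: istep_l.
move=> run; have [Y irun [_ EY]] := star_simulation step run (conj erefl erefl).
by rewrite EY in irun.
Qed.

Definition lconf_le C D := forall i, C i = Empty -> D i = Empty.

Lemma lconf_le_full C D : (forall i, C i = Full) -> lconf_le C D.
Proof. by move=> full i; rewrite full. Qed.

Lemma lconf_le_upd C D i l : lconf_le C D -> lconf_le (upd C i l) (upd D i l).
Proof. by move=> le j; rewrite /upd; case: (j == i); [|apply: le]. Qed.

Lemma fire_mono s C C' D :
  lconf_le C C' -> fire s C D -> exists2 D', fire s C' D' & lconf_le D D'.
Proof.
case: s => i le /=; last by move=> ->; exists (upd C' i Empty); last exact: lconf_le_upd.
by case=> /le Ci ->; exists (upd C' i Full); last exact: lconf_le_upd.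
Qed.

Lemma istar_mono a b C a' b' D C' :
  lconf_le C C' -> star istep (a, b, C) (a', b', D) ->
  exists D', star istep (a, b, C') (a', b', D').
Proof.
pose sim (X Y : istate) := X.1 = Y.1 /\ lconf_le X.2 Y.2.
have step X X' Y : istep X X' -> sim X Y -> exists2 Y', istep Y Y' & sim X' Y'.
  case: X X' / => s0 a0 b0 C0 D0 H; case: Y => [[a1 b1] C1] [/= [<- <-] le];
    have [D1 H1 le1] := fire_mono le H.
    by exists (a0, b0, D1); first exact: istep_l.
  by exists (a0, b0, D1); first exact: istep_r.
move=> le run; have [[[a1 b1] D1] irun [/= [-> ->] _]] :=
  star_simulation step run (conj erefl le : sim (a, b, C) (a, b, C')).
by exists D1.
Qed.

Lemma istar_fires_right X Y u s v :
  star istep X Y -> Y.1.2 = [::] -> X.1.2 = u ++ s :: v ->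
  exists a1 C1 D1, star istep X (a1, s :: v, C1) /\ fire s C1 D1.
Proof.
move=> run; elim: run u => [Z|X0 Y0 Z H _ IH] u EZ; first by rewrite EZ; case: u.
case: X0 Y0 / H IH => s0 a0 b0 C0 D0 H IH /= Eb.
  have [a1 [C1 [D1 [run HC]]]] := IH u EZ Eb.
  by exists a1, C1, D1; split=> //; apply: star_step run; apply: istep_l.
case: u Eb => [[<- <-]|t u [_ Eb]]; first by exists a0, C0, D0; split=> //; apply: star_refl.
have [a1 [C1 [D1 [run HC]]]] := IH u EZ Eb.
by exists a1, C1, D1; split=> //; apply: star_step run; apply: istep_r.
Qed.

Lemma btype_run_BP w C seen i :
  btype_run w C seen = BP i -> seen i = false /\ C i = Full.
Proof.
elim: w C seen => [//|[j|j] w IH] C seen /=.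
  case Cj: (C j); last by case sj: (seen j) => // -[<-].
  all: by move/IH; rewrite /upd; case: (i == j) => // -[].
Qed.

Lemma btype_of_BP w C i : btype_of w C = BP i -> C i = Full.
Proof. by case/btype_run_BP. Qed.

Lemma blocks_rcons w : blocks w -> w = [::] \/ exists u i, w = rcons u (LP i).
Proof.
case=> bs [+ ->]; elim/last_ind: bs => [_|bs b _]; first by left.
rewrite -cats1 => /Forall_app [_ last_block].
have [ts [i [_ ->]]] : is_block b := Forall_inv last_block; right.
by exists (flatten bs ++ ts), i; rewrite cats1 flatten_rcons rcons_cat.
Qed.

End Locks.

Arguments istep {k}.

Section SyncFlat.
Implicit Types (U V : sproc) (P Q : sprocess).

Definition is_send U : bool := if U is SSend _ then true else false.
Definition is_recv U : bool := if U is SRecv _ then true else false.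
Definition is_check U : bool := if U is SCheck then true else false.

Definition is_flat U : bool :=
  match U with SSend V | SRecv V => ~~ is_send V && ~~ is_recv V | _ => true end.

Definition sees_check U : bool :=
  match U with SSend V | SRecv V => is_check V | U => is_check U end.

Definition flat_balanced P : Prop :=
  [/\ all is_flat P, count is_send P = count is_recv P & has sees_check P].

Lemma flat_balanced_Permutation P Q : Permutation P Q -> flat_balanced P -> flat_balanced Q.
Proof.
move=> PQ.
by rewrite /flat_balanced !all_count !has_count -!count_predT !(count_Permutation _ PQ).
Qed.

Lemma sstep_flat_balanced P Q : sstep P Q -> flat_balanced P -> flat_balanced Q.
Proof.
case=> U1 U2 R P0 Q0 HP HQ FB.
apply: flat_balanced_Permutation (Permutation_sym HQ) _.
move: (flat_balanced_Permutation HP FB) => {P0 Q0 HP HQ FB}.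
case: U1 => [||?|?]; case: U2 => [||?|?]; case=> /=; rewrite ?andbF //.
all: by rewrite ?add0n ?add1n => flat [cnt] chk; split=> //=; rewrite ?add0n.
Qed.

Lemma sstep_In V W P : In (SSend V) P -> In (SRecv W) P -> exists R, sstep P (V :: W :: R).
Proof.
move=> PV PW; have [//|R HR] := In2_Permutation PV PW.
by exists R; apply: sstep_intro HR (Permutation_refl _).
Qed.

Lemma flat_balanced_may P : flat_balanced P -> smay P.
Proof.
have succ Q V W : sstep P (V :: W :: Q) -> is_check V || is_check W -> smay P.
  move=> step chk; exists (V :: W :: Q); split; first exact: star_one.
  by case/orP: chk; [case: (V) | case: (W)] => // _; [left | right; left].
case=> _ cnt /hasP_In [[||V|W] PU //= chk]; first by exists P; split; first exact: star_refl.
- have /hasP_In [[|||W] PW // _] : has is_recv P.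
    by rewrite has_count -cnt -has_count; apply/hasP_In; exists (SSend V).
  by have [R /succ] := sstep_In PU PW; apply; rewrite chk.
- have /hasP_In [[||V|] PV // _] : has is_send P.
    by rewrite has_count cnt -has_count; apply/hasP_In; exists (SRecv W).
  by have [R /succ] := sstep_In PV PU; apply; rewrite chk orbT.
Qed.

Lemma flat_balanced_must P : flat_balanced P -> smust P.
Proof.
move=> FB Q run; elim: run FB => [? /flat_balanced_may //|P0 Q0 R0 step _ IH FB].
exact/IH/(sstep_flat_balanced step).
Qed.

End SyncFlat.

Section Translation.
Variables (k : nat) (w1 w2 : seq (lsym k)) (j : 'I_k).

Lemma lmay_reaches_last_P u C :
  w2 = rcons u (LP j) -> lmay ([:: (w1, false); (w2, true)], C) ->
  exists a1 C1, star istep (w1, w2, C) (a1, [:: LP j], C1) /\ C1 j = Empty.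
Proof.
move=> w2_last /lmay_pair [a' [b' [D [run [[_ //]|[b'0 _]]]]]].
have w2E : w2 = u ++ [:: LP j] by rewrite w2_last cats1.
have [a1 [C1 [D1 [run1 [C1j _]]]]] := istar_fires_right run b'0 w2E.
by exists a1, C1.
Qed.

Lemma lmust_finishes_left C a1 C1 :
  star istep (w1, w2, C) (a1, [:: LP j], C1) -> C1 j = Empty ->
  lmust ([:: (w1, true); (w2, false)], C) ->
  exists E, star istep (w1, w2, C) ([::], [:: LP j], E).
Proof.
move=> run1 C1j must; set C2 := upd C1 j Full.
have run2 : star istep (w1, w2, C) (a1, [::], C2).
  by apply: star_trans run1 (star_one _); apply: istep_r.
have /must/lmay_pair [a' [b' [E [run3 [[a'0 _]|[_ //]]]]]] :=
  istar_lstar [::] [::] true false run2.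
have le21 : lconf_le C2 C1 by move=> i; rewrite /C2 /upd; case: (i == j).
have [E' run4] := istar_mono le21 (istar_right_idle [:: LP j] run3).
by rewrite a'0 in run4; exists E'; apply: star_trans run1 run4.
Qed.

Lemma not_lmust_four_threads IS E :
  (forall i, IS i = Full) -> star istep (w1, w2, IS) ([::], [:: LP j], E) ->
  ~ lmust ([:: (w1, false); (w2, true); (w1, false); (w2, false)], IS).
Proof.
move=> full run.
have [E' run'] := istar_mono (lconf_le_full E full) run.
have run2 := star_trans (istar_lstar [::] [:: (w1, false); (w2, false)] false true run)
  (istar_lstar [:: ([::], false); ([:: LP j], true)] [::] false false run').
set S4 := [:: ([::], false); ([:: LP j], true); ([::], false); ([:: LP j], false)].
have words x : In x S4 -> x.1 = [::] \/ x.1 = [:: LP j].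
  by move=> /= [<-|[<-|[<-|[<-|[]]]]]; auto.
case E'j : (E' j); last first.
  by apply: not_lmust_stuck run2 E'j words _ => /= -[|[|[|[|[]]]]].
have fire4 : fire (LP j) E' (upd E' j Full) by [].
have step4 :=
  lstep_frame [:: ([::], false); ([:: LP j], true); ([::], false)] [::] [::] false fire4.
apply: (not_lmust_stuck (j := j) (star_trans run2 (star_one step4))).
- by rewrite /upd eqxx.
- by move=> x /= [<-|[<-|[<-|[<-|[]]]]]; auto.
- by move=> /= [|[|[|[|[]]]]].
Qed.

End Translation.

Theorem proposition5p13 (IS : lconf 2) (w1 w2 : seq (lsym 2)) :
  btype_of w1 IS = BP idx1 ->
  btype_of w2 IS = BP idx2 ->
  blocks_then_Ts w1 ->
  blocks w2 ->
  ~ correct w1 w2 IS.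
Proof.
move=> /btype_of_BP full1 tau2 _ /blocks_rcons [w2E|[u [j w2_last]]] tau_correct.
  by rewrite w2E in tau2.
have full i : IS i = Full.
  have [->|->] : i = idx1 \/ i = idx2.
    by case: i => -[|[|]] // lt_i_2; [left | right]; apply/val_inj.
  - exact: full1.
  - exact: btype_of_BP tau2.
have tau_may P : smay P -> lmay (trP w1 w2 P, IS) := (tau_correct P).1.1.
have tau_must P : smust P -> lmust (trP w1 w2 P, IS) := (tau_correct P).2.1.
have /tau_may may :=
  flat_balanced_may (P := [:: SSend SZero; SRecv SCheck]) (And3 erefl erefl erefl).
have /tau_must must :=
  flat_balanced_must (P := [:: SSend SCheck; SRecv SZero]) (And3 erefl erefl erefl).
have /tau_must := flat_balanced_must
  (P := [:: SSend SZero; SRecv SCheck; SSend SZero; SRecv SZero]) (And3 erefl erefl erefl).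
rewrite /trP /= !cats0 in may must *.
have [a1 [C1 [run1 C1j]]] := lmay_reaches_last_P w2_last may.
have [E run] := lmust_finishes_left run1 C1j must.
exact: not_lmust_four_threads full run.
Qed.
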